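(* Let $u,v>0$ and $0<a,b\le 1$, and consider the map $(x,y)\mapsto\big((1-a)x+auy(1-y),\ (1-b)y+bvx(1-x)\big)$ on $\mathbb{R}^2$. If $uv\ge 1$, then every (real) equilibrium $(x^*,y^* )$ of this map lies in $[0,1]\times[0,1]$.
   Context: An equilibrium of the map is a real fixed point $(x^*,y^* )$; equivalently (since $a,b>0$) a real solution of $x^*=uy^*(1-y^* )$, $y^*=vx^*(1-x^* )$. This is Kopel's duopoly map. *)

From Stdlib Require Import Reals.
Open Scope R_scope.

Definition kopel (u v a b : R) (p : R * R) : R * R :=
  let (x, y) := p in
  ((1 - a) * x + a * u * y * (1 - y), (1 - b) * y + b * v * x * (1 - x)).

Definition equilibrium (u v a b : R) (p : R * R) : Prop :=
  kopel u v a b p = p.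

(* At an equilibrium the relaxation weights a, b cancel, leaving the
   best-response equations x = u y (1 - y), y = v x (1 - x).  Since
   c t (1 - t) < c t for t <> 0, a negative x forces y < v x < 0 and then
   x < u y < u v x <= x, which is absurd when u v >= 1; so x, y >= 0.
   Finally x > 1 would make y = v x (1 - x) negative, and symmetrically for y. *)
From Stdlib Require Import Reals Lra Psatz.
Open Scope R_scope.

Lemma equilibrium_best_responses (u v a b x y : R) :
  a <> 0 -> b <> 0 -> equilibrium u v a b (x, y) ->
  x = u * y * (1 - y) /\ y = v * x * (1 - x).
Proof.
  intros ha hb he.
  unfold equilibrium, kopel in he.
  injection he as ex ey.
  split.
  - apply (Rmult_eq_reg_l a); [lra | exact ha].
  - apply (Rmult_eq_reg_l b); [lra | exact hb].
Qed.

Lemma logistic_lt_linear (c t : R) : 0 < c -> t <> 0 -> c * t * (1 - t) < c * t.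
Proof.
  intros hc ht.
  assert (0 < c * (t * t)) by (apply Rmult_lt_0_compat; [exact hc | nra]).
  nra.
Qed.

Lemma logistic_neg_gt1 (c t : R) : 0 < c -> 1 < t -> c * t * (1 - t) < 0.
Proof.
  intros hc ht.
  assert (0 < c * t) by (apply Rmult_lt_0_compat; lra).
  nra.
Qed.

Lemma best_responses_nonneg (u v x y : R) :
  0 < u -> 0 < v -> 1 <= u * v ->
  x = u * y * (1 - y) -> y = v * x * (1 - x) -> 0 <= x.
Proof.
  intros hu hv huv hx hy.
  destruct (Rle_or_lt 0 x) as [hx0 | hx0]; [exact hx0 | exfalso].
  assert (hyx : y < v * x) by (rewrite hy; apply logistic_lt_linear; lra).
  assert (hy0 : y < 0) by nra.
  assert (hxy : x < u * y) by (rewrite hx at 1; apply logistic_lt_linear; lra).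
  assert (u * y < u * (v * x)) by (apply Rmult_lt_compat_l; assumption).
  nra.
Qed.

Lemma best_response_le1 (v x y : R) :
  0 < v -> 0 <= y -> y = v * x * (1 - x) -> x <= 1.
Proof.
  intros hv hy0 hy.
  destruct (Rle_or_lt x 1) as [hx1 | hx1]; [exact hx1 | exfalso].
  pose proof (logistic_neg_gt1 v x hv hx1).
  lra.
Qed.

Theorem proposition1 (u v a b x y : R) :
  0 < u -> 0 < v -> 0 < a <= 1 -> 0 < b <= 1 -> u * v >= 1 ->
  equilibrium u v a b (x, y) ->
  0 <= x <= 1 /\ 0 <= y <= 1.
Proof.
  intros hu hv ha hb huv he.
  destruct (equilibrium_best_responses u v a b x y) as [hx hy]; [lra | lra | exact he |].
  assert (hx0 : 0 <= x) by (apply (best_responses_nonneg u v x y); lra).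
  assert (hy0 : 0 <= y) by (apply (best_responses_nonneg v u y x); lra).
  pose proof (best_response_le1 v x y hv hy0 hy).
  pose proof (best_response_le1 u y x hu hx0 hx).
  lra.
Qed.
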